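(* Let $1\le k\le n$ be integers, let $M\in\mathbb{R}^{2n\times 2n}$ be symmetric positive definite, let $N=\operatorname{diag}(\nu_1,\ldots,\nu_k)$ with $0<\nu_1<\cdots<\nu_k$, and let $\tilde N=\operatorname{diag}(N,N)$. Consider the problem of minimizing $f(X)=\operatorname{tr}(\tilde N X^TMX)$ over $X\in\mathbb{R}^{2n\times 2k}$ subject to $X^TJ_{2n}X=J_{2k}$. Let $X_*$ be a critical point of this problem whose columns are associated with the symplectic eigenvalues $[d_{i_1},\ldots,d_{i_k}]$ of $M$, i.e., $X_*^TMX_*=\operatorname{diag}(D_{\mathcal I_k},D_{\mathcal I_k})$ with $D_{\mathcal I_k}=\operatorname{diag}(d_{i_1},\ldots,d_{i_k})$, and suppose these are not in nonincreasing order, i.e., there exist $1\le\alpha<\beta\le k$ with $d_{i_\alpha}<d_{i_\beta}$. Then $X_*$ is not a (local) minimizer of the problem, and therefore it is a saddle point.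
   Context: $J_{2m}=\begin{bmatrix}0 & I_m\\ -I_m & 0\end{bmatrix}$. The symplectic eigenvalues of $M$ are the positive numbers $d_1,\ldots,d_n$ such that $S^TMS=\operatorname{diag}(D,D)$, $D=\operatorname{diag}(d_1,\ldots,d_n)$, for some $S\in\mathbb{R}^{2n\times2n}$ with $S^TJ_{2n}S=J_{2n}$ (Williamson's theorem). A point $X_*$ is a critical point of the problem if $X_*^TJ_{2n}X_*=J_{2k}$ and there exists a skew-symmetric $L_*\in\mathbb{R}^{2k\times 2k}$ with $MX_*\tilde N=J_{2n}X_*L_*$. A saddle point is a critical point that is neither a local minimizer nor a local maximizer of $f$ on the feasible set $\{X: X^TJ_{2n}X=J_{2k}\}$. *)

From mathcomp Require Import all_boot all_order all_algebra.
From mathcomp Require Import reals.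
Set Implicit Arguments. Unset Strict Implicit. Unset Printing Implicit Defensive.
Import Order.TTheory GRing.Theory Num.Theory.
Local Open Scope ring_scope.

Section Defs.
Variable R : realType.

Definition Jmx (m : nat) : 'M[R]_(m + m) :=
  block_mx 0 1%:M (- 1%:M) 0.

Definition bdiag2 (m : nat) (A : 'M[R]_m) : 'M[R]_(m + m) := block_mx A 0 0 A.

Definition diagv (m : nat) (d : 'I_m -> R) : 'M[R]_m := diag_mx (\row_i d i).

Definition symmetric_mx (m : nat) (A : 'M[R]_m) : Prop := A^T = A.

Definition skew_mx (m : nat) (A : 'M[R]_m) : Prop := A^T = - A.

Definition posdef_mx (m : nat) (A : 'M[R]_m) : Prop :=
  symmetric_mx A /\ forall v : 'cV[R]_m, v != 0 -> 0 < (v^T *m A *m v) 0 0.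

Definition symplectic (m : nat) (S : 'M[R]_(m + m)) : Prop :=
  S^T *m Jmx m *m S = Jmx m.

(* Williamson: d_1..d_n are the symplectic eigenvalues of M
   (as a multiset; indexing d : 'I_n -> R) *)
Definition symplectic_eigenvalues (n : nat) (M : 'M[R]_(n + n)) (d : 'I_n -> R)
  : Prop :=
  (forall i, 0 < d i) /\
  exists S : 'M[R]_(n + n), symplectic S /\ S^T *m M *m S = bdiag2 (diagv d).

Definition feasible (n k : nat) (X : 'M[R]_(n + n, k + k)) : Prop :=
  X^T *m Jmx n *m X = Jmx k.

Definition fobj (n k : nat) (M : 'M[R]_(n + n)) (nu : 'I_k -> R)
  (X : 'M[R]_(n + n, k + k)) : R :=
  \tr (bdiag2 (diagv nu) *m X^T *m M *m X).

Definition critical_point (n k : nat) (M : 'M[R]_(n + n)) (nu : 'I_k -> R)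
  (X : 'M[R]_(n + n, k + k)) : Prop :=
  feasible X /\
  exists L : 'M[R]_(k + k), skew_mx L /\
    M *m X *m bdiag2 (diagv nu) = Jmx n *m X *m L.

(* local minimizer / maximizer of f on the feasible set; neighbourhoods are
   taken entrywise (all norms on a finite-dimensional space are equivalent) *)
Definition local_minimizer (n k : nat) (M : 'M[R]_(n + n)) (nu : 'I_k -> R)
  (X : 'M[R]_(n + n, k + k)) : Prop :=
  feasible X /\
  exists2 e : R, 0 < e & forall Y : 'M[R]_(n + n, k + k), feasible Y ->
    (forall i j, `|Y i j - X i j| < e) -> fobj M nu X <= fobj M nu Y.

Definition local_maximizer (n k : nat) (M : 'M[R]_(n + n)) (nu : 'I_k -> R)
  (X : 'M[R]_(n + n, k + k)) : Prop :=
  feasible X /\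
  exists2 e : R, 0 < e & forall Y : 'M[R]_(n + n, k + k), feasible Y ->
    (forall i j, `|Y i j - X i j| < e) -> fobj M nu Y <= fobj M nu X.

Definition saddle_point (n k : nat) (M : 'M[R]_(n + n)) (nu : 'I_k -> R)
  (X : 'M[R]_(n + n, k + k)) : Prop :=
  critical_point M nu X /\ ~ local_minimizer M nu X /\ ~ local_maximizer M nu X.

End Defs.

From mathcomp Require Import all_boot all_order all_algebra.
From mathcomp Require Import reals.
From mathcomp Require Import ring lra.
Import Order.TTheory GRing.Theory Num.Theory.
Local Open Scope ring_scope.
Set Implicit Arguments.
Unset Strict Implicit.

(* Right multiplication by a symplectic P preserves the constraint, and
   diag(A, B) is symplectic as soon as A^T B = 1.  When X^T M X = diag(D, D)
   with D diagonal, f(X diag(A, B)) = tr(N A^T D A) + tr(N B^T D B).  Taking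
   A = B = a Givens rotation by a small angle in the (alpha, beta) coordinate
   plane changes f by 2 s^2 (nu_alpha - nu_beta) (d_beta - d_alpha) < 0, so X
   is not a local minimizer; the stretch A = t I, B = t^-1 I multiplies f by
   (t^2 + t^-2) / 2 > 1, so X is not a local maximizer either.  Both families
   of perturbations tend to the identity, and X P tends to X uniformly as P
   tends to the identity. *)

Section DiagonalTrace.
Variables (R : comPzRingType) (k : nat).

Lemma mxtrace_diag_mul (w d : 'I_k -> R) :
  \tr (diag_mx (\row_i w i) *m diag_mx (\row_i d i)) = \sum_i w i * d i.
Proof.
by rewrite /mxtrace; apply: eq_bigr => i _; rewrite mul_diag_mx !mxE eqxx mulr1n.
Qed.

Lemma mxtrace_diag_conj (w d : 'I_k -> R) (Q : 'M[R]_k) :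
  \tr (diag_mx (\row_i w i) *m Q^T *m diag_mx (\row_i d i) *m Q) =
  \sum_i w i * \sum_l Q l i * d l * Q l i.
Proof.
rewrite /mxtrace; apply: eq_bigr => i _.
rewrite -!mulmxA mul_diag_mx !mxE; congr (_ * _); apply: eq_bigr => l _.
by rewrite mul_diag_mx !mxE mulrA.
Qed.

End DiagonalTrace.

Lemma mxtrace_diag_mul_gt0 (R : numDomainType) k (w d : 'I_k -> R) (i0 : 'I_k) :
  (forall i, 0 < w i) -> (forall i, 0 < d i) ->
  0 < \tr (diag_mx (\row_i w i) *m diag_mx (\row_i d i)).
Proof.
move=> w_gt0 d_gt0; rewrite mxtrace_diag_mul (bigD1 i0) //=.
by rewrite ltr_pwDl ?mulr_gt0 // sumr_ge0 // => i _; rewrite mulr_ge0 // ltW.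
Qed.

Lemma sum_mulrb (V : nmodType) (I : finType) (F : I -> V) j :
  \sum_i F i *+ (i == j) = F j.
Proof. by under eq_bigr do rewrite mulrb; rewrite -big_mkcond big_pred1_eq. Qed.

Section Givens.
Variables (R : comPzRingType) (k : nat) (a b : 'I_k) (c s : R).

Definition givens : 'M[R]_k :=
  \matrix_(l, i) if i == a then c *+ (l == a) + s *+ (l == b)
                 else if i == b then c *+ (l == b) - s *+ (l == a)
                 else (l == i)%:R.

Lemma givensE l i : givens l i =
  if i == a then c *+ (l == a) + s *+ (l == b)
  else if i == b then c *+ (l == b) - s *+ (l == a)
  else (l == i)%:R.
Proof. by rewrite mxE. Qed.

Lemma givens_row_action (F : 'I_k -> R) i :
  \sum_l F l * givens l i =
  if i == a then F a * c + F b * s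
  else if i == b then F b * c - F a * s
  else F i.
Proof.
under eq_bigr do rewrite givensE.
case: ifP => _; last case: ifP => _.
- rewrite -(sum_mulrb (fun l => F l * c)) -(sum_mulrb (fun l => F l * s)) -big_split.
  by apply: eq_bigr => l _; rewrite mulrDr !mulrnAr.
- rewrite -(sum_mulrb (fun l => F l * c)) -(sum_mulrb (fun l => F l * s)) -sumrB.
  by apply: eq_bigr => l _; rewrite mulrBr !mulrnAr.
- by rewrite -sum_mulrb; apply: eq_bigr => l _; rewrite mulr_natr.
Qed.

Hypotheses (neq_ab : a != b) (cs1 : c ^+ 2 + s ^+ 2 = 1).

Lemma givens_orthogonal : givens^T *m givens = 1%:M.
Proof.
have neq_ba : b != a by rewrite eq_sym.
apply/matrixP => i j; rewrite !mxE.
under eq_bigr do rewrite mxE.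
rewrite (givens_row_action (fun l => givens l i)) !givensE.
case: (eqVneq i a) => [->|nia]; last case: (eqVneq i b) => [->|nib];
(case: (eqVneq j a) => [eja|nja]; [|case: (eqVneq j b) => [ejb|njb]]); subst;
rewrite ?eqxx ?(negbTE neq_ab) ?(negbTE neq_ba) ?[_ == i]eq_sym
  ?(negbTE nia) ?(negbTE nib) ?(negbTE nja) ?(negbTE njb) /=;
by rewrite ?mulr1n ?mulr0n -?cs1; ring.
Qed.

Lemma givens_quadratic x y : c * x * c + s * y * s = x + s ^+ 2 * (y - x).
Proof.
transitivity ((c ^+ 2 + s ^+ 2) * x + s ^+ 2 * (y - x)); first by ring.
by rewrite cs1 mul1r.
Qed.

Lemma mxtrace_diag_conj_givens (w d : 'I_k -> R) :
  \tr (diag_mx (\row_i w i) *m givens^T *m diag_mx (\row_i d i) *m givens) =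
  \tr (diag_mx (\row_i w i) *m diag_mx (\row_i d i))
  + s ^+ 2 * (w a - w b) * (d b - d a).
Proof.
have neq_ba : b != a by rewrite eq_sym.
pose e i := if i == a then s ^+ 2 * (d b - d a)
            else if i == b then s ^+ 2 * (d a - d b) else 0.
have weighted_col_sq i : \sum_l givens l i * d l * givens l i = d i + e i.
  rewrite (givens_row_action (fun l => givens l i * d l)) !givensE /e.
  case: (eqVneq i a) => [->|nia]; last case: (eqVneq i b) => [->|nib];
  rewrite ?eqxx ?(negbTE neq_ab) ?(negbTE neq_ba) ?(negbTE nia) ?(negbTE nib)
    ?[_ == i]eq_sym ?(negbTE nia) ?(negbTE nib) /= ?mulr1n ?mulr0n;
  by rewrite -?givens_quadratic; ring.
rewrite mxtrace_diag_conj mxtrace_diag_mul.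
under eq_bigr do rewrite weighted_col_sq mulrDr.
rewrite big_split /=; congr (_ + _).
rewrite (bigD1 a) // (bigD1 b) //= big1 => [|i /andP [nib nia]].
  by rewrite /e eqxx (negbTE neq_ba) eqxx addr0; ring.
by rewrite /e (negbTE nia) (negbTE nib) mulr0.
Qed.

End Givens.

Section NearIdentity.
Variable R : numFieldType.

Definition near_identity m (P : 'M[R]_m) (delta : R) :=
  forall i j, `|(P - 1%:M) i j| <= delta.

Lemma near_identity_block_diag m (A B : 'M[R]_m) delta : 0 <= delta ->
  near_identity A delta -> near_identity B delta ->
  near_identity (block_mx A 0 0 B) delta.
Proof.
move=> delta_ge0 nearA nearB i j.
rewrite [1%:M]scalar_mx_block opp_block_mx add_block_mx oppr0 addr0.
rewrite -(splitK i) -(splitK j).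
case: (split i) => i'; case: (split j) => j';
rewrite ?block_mxEul ?block_mxEur ?block_mxEdl ?block_mxEdr //.
all: by rewrite mxE normr0.
Qed.

Lemma near_identity_scalar m (x delta : R) : `|x - 1| <= delta ->
  near_identity (x%:M : 'M[R]_m) delta.
Proof.
move=> near_x i j; rewrite !mxE; case: (i == j) => //=.
by rewrite subr0 normr0 (le_trans _ near_x).
Qed.

Lemma mulmx_near_identity p q (X : 'M[R]_(p, q)) e : 0 < e ->
  exists2 delta, 0 < delta & forall P, near_identity P delta ->
    forall i j, `|(X *m P) i j - X i j| < e.
Proof.
move=> e_gt0; set B := \sum_i \sum_l `|X i l|.
have B_ge0 : 0 <= B by do 2!apply: sumr_ge0 => ? _.
have delta_gt0 : 0 < e / (B + 1) by rewrite divr_gt0 // ltr_wpDl.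
exists (e / (B + 1)) => // P nearP i j.
have row_le_B : \sum_l `|X i l| <= B.
  by rewrite /B (bigD1 i) //= lerDl; apply: sumr_ge0 => *; apply: sumr_ge0.
have -> : (X *m P) i j - X i j = (X *m (P - 1%:M)) i j.
  by rewrite mulmxBr mulmx1 !mxE.
rewrite mxE; apply: le_lt_trans (ler_norm_sum _ _ _) _.
apply: (@le_lt_trans _ _ ((\sum_l `|X i l|) * (e / (B + 1)))).
  by rewrite mulr_suml; apply: ler_sum => l _; rewrite normrM ler_wpM2l.
apply: le_lt_trans (ler_wpM2r (ltW delta_gt0) row_le_B) _.
by rewrite mulrCA gtr_pMr // ltr_pdivrMr ?ltr_wpDl // mul1r ltrDl.
Qed.

Lemma near_identity_givens k (a b : 'I_k) (c s delta : R) : a != b ->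
  `|c - 1| <= delta -> `|s| <= delta -> near_identity (givens a b c s) delta.
Proof.
move=> neq_ab near_c near_s l i.
have neq_ba : b != a by rewrite eq_sym.
have delta_ge0 : 0 <= delta by apply: le_trans near_s.
rewrite !mxE.
case: (eqVneq i a) => [->|nia]; last case: (eqVneq i b) => [->|nib];
(case: (eqVneq l a) => [ela|nla]; [|case: (eqVneq l b) => [elb|nlb]]); subst;
rewrite ?eqxx ?(negbTE neq_ab) ?(negbTE neq_ba) ?(negbTE nia) ?(negbTE nib)
  ?(negbTE nla) ?(negbTE nlb) ?[_ == i]eq_sym ?(negbTE nia) ?(negbTE nib) /=;
by rewrite ?mulr1n ?mulr0n ?addr0 ?add0r ?sub0r ?subr0 ?subrr ?normrN ?normr0.
Qed.

End NearIdentity.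

Lemma small_rotation (R : realFieldType) (delta : R) : 0 < delta ->
  exists c s : R, [/\ c ^+ 2 + s ^+ 2 = 1, s != 0, `|c - 1| <= delta & `|s| <= delta].
Proof.
move=> delta_gt0.
have [t t_gt0 ->] : exists2 t : R, 0 < t & delta = 2 * t.
  by exists (delta / 2); [rewrite divr_gt0 | field].
have u_gt0 : 0 < 1 + t ^+ 2 by rewrite ltr_pwDl ?sqr_ge0.
have u_neq0 : 1 + t ^+ 2 != 0 by rewrite gt_eqF.
(* the point of angle 2 atan t on the unit circle *)
exists ((1 - t ^+ 2) / (1 + t ^+ 2)), (2 * t / (1 + t ^+ 2)); split.
- by field.
- by rewrite gt_eqF // divr_gt0 ?mulr_gt0.
- rewrite (_ : _ - 1 = - (2 * t ^+ 2 / (1 + t ^+ 2))); last by field.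
  rewrite normrN ger0_norm ?ler_pdivrMr //; first by nra.
  by apply: divr_ge0; [nra | exact: ltW].
- rewrite ger0_norm ?ler_pdivrMr //; first by nra.
  by apply: divr_ge0; [nra | exact: ltW].
Qed.

Section SymplecticPerturbation.
Variables (R : realType) (n k : nat) (M : 'M[R]_(n + n)) (nu : 'I_k -> R).
Variable X : 'M[R]_(n + n, k + k).

Lemma symplectic_block_diag (A B : 'M[R]_k) :
  A^T *m B = 1%:M -> symplectic (block_mx A 0 0 B).
Proof.
move=> AB1; have BA1 : B^T *m A = 1%:M by rewrite -[A]trmxK -trmx_mul AB1 trmx1.
rewrite /symplectic /Jmx tr_block_mx !trmx0 !mulmx_block.
by rewrite !mulmx0 !mul0mx !addr0 !add0r mulmx1 mulmxN mulmx1 mulNmx AB1 BA1 !mul0mx.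
Qed.

Lemma feasible_mulmx P : feasible X -> symplectic P -> feasible (X *m P).
Proof.
rewrite /feasible /symplectic => feasX sympP.
by rewrite trmx_mul !mulmxA -(mulmxA P^T X^T) -(mulmxA P^T) feasX.
Qed.

Lemma not_local_minimizer_of_descent :
  (forall delta, 0 < delta -> exists P, [/\ symplectic P, near_identity P delta
     & fobj M nu (X *m P) < fobj M nu X]) ->
  ~ local_minimizer M nu X.
Proof.
move=> descent [feasX [e e_gt0 X_min]].
have [delta delta_gt0 near_X] := mulmx_near_identity X e_gt0.
have [P [sympP nearP descP]] := descent _ delta_gt0.
by move: (X_min _ (feasible_mulmx feasX sympP) (near_X _ nearP)); rewrite leNgt descP.
Qed.

Lemma not_local_maximizer_of_ascent :
  (forall delta, 0 < delta -> exists P, [/\ symplectic P, near_identity P delta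
     & fobj M nu X < fobj M nu (X *m P)]) ->
  ~ local_maximizer M nu X.
Proof.
move=> ascent [feasX [e e_gt0 X_max]].
have [delta delta_gt0 near_X] := mulmx_near_identity X e_gt0.
have [P [sympP nearP ascP]] := ascent _ delta_gt0.
by move: (X_max _ (feasible_mulmx feasX sympP) (near_X _ nearP)); rewrite leNgt ascP.
Qed.

Section BlockDiagonalGram.
Variable D : 'M[R]_k.
Hypothesis XMX : X^T *m M *m X = bdiag2 D.

Lemma fobj_block_diag (A B : 'M[R]_k) :
  fobj M nu (X *m block_mx A 0 0 B) =
  \tr (diagv nu *m A^T *m D *m A) + \tr (diagv nu *m B^T *m D *m B).
Proof.
set P := block_mx A 0 0 B.
have -> : fobj M nu (X *m P) =
    \tr (bdiag2 (diagv nu) *m P^T *m (X^T *m M *m X) *m P).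
  by rewrite /fobj trmx_mul !mulmxA.
rewrite XMX /P /bdiag2 tr_block_mx !trmx0 !mulmx_block.
by rewrite !mulmx0 !mul0mx !addr0 !add0r mxtrace_block.
Qed.

Lemma fobj_bdiag2 : fobj M nu X = \tr (diagv nu *m D) *+ 2.
Proof.
have -> : X = X *m block_mx 1%:M 0 0 1%:M by rewrite -scalar_mx_block mulmx1.
by rewrite fobj_block_diag trmx1 !mulmx1.
Qed.

End BlockDiagonalGram.

Section DiagonalGram.
Variable d : 'I_k -> R.
Hypothesis XMX : X^T *m M *m X = bdiag2 (diagv d).

Lemma not_local_minimizer_of_inversion (a b : 'I_k) :
  nu a < nu b -> d a < d b -> ~ local_minimizer M nu X.
Proof.
move=> nu_ab d_ab; apply: not_local_minimizer_of_descent => delta delta_gt0.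
have neq_ab : a != b by apply: contraTneq nu_ab => ->; rewrite ltxx.
have [c [s [cs1 s_neq0 near_c near_s]]] := small_rotation delta_gt0.
exists (block_mx (givens a b c s) 0 0 (givens a b c s)); split.
- exact: symplectic_block_diag (givens_orthogonal neq_ab cs1).
- by apply: near_identity_block_diag (ltW delta_gt0) _ _; apply: near_identity_givens.
- have gap_lt0 : s ^+ 2 * (nu a - nu b) * (d b - d a) < 0.
    rewrite -mulrA pmulr_rlt0 ?exprn_even_gt0 ?s_neq0 ?orbT //.
    by rewrite nmulr_rlt0 ?subr_gt0 ?subr_lt0.
  rewrite (fobj_block_diag XMX (givens a b c s)) (fobj_bdiag2 XMX) /diagv.
  by rewrite mxtrace_diag_conj_givens //; lra.
Qed.

Lemma not_local_maximizer_of_trace_gt0 :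
  0 < \tr (diagv nu *m diagv d) -> ~ local_maximizer M nu X.
Proof.
move=> trace_gt0; apply: not_local_maximizer_of_ascent => delta delta_gt0.
set t := 1 + delta.
have t_gt1 : 1 < t by rewrite ltrDl.
have t_gt0 : 0 < t by apply: lt_trans t_gt1.
have t_neq0 : t != 0 by rewrite gt_eqF.
exists (block_mx t%:M 0 0 t^-1%:M); split.
- by apply: symplectic_block_diag; rewrite tr_scalar_mx -scalar_mxM mulfV.
- apply: near_identity_block_diag (ltW delta_gt0) _ _; apply: near_identity_scalar.
    by rewrite /t addrC addKr ger0_norm // ltW.
  rewrite (_ : t^-1 - 1 = - (delta / t)); last by rewrite /t; field.
  rewrite normrN ger0_norm; last by rewrite divr_ge0 // ltW.
  by rewrite ler_pdivrMr // ler_pMr // ltW.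
- rewrite (fobj_block_diag XMX) (fobj_bdiag2 XMX) !tr_scalar_mx !mul_mx_scalar.
  rewrite -!scalemxAl !mxtraceZ; set T := \tr _.
  rewrite -subr_gt0 (_ : _ - _ = (t - t^-1) ^+ 2 * T + (t * t^-1 - 1) * T *+ 2).
    by rewrite mulfV // subrr mul0r mul0rn addr0 mulr_gt0 // exprn_gt0 // subr_gt0
      (lt_trans _ t_gt1) // invf_lt1.
  by ring.
Qed.

End DiagonalGram.

End SymplecticPerturbation.

Unset Implicit Arguments.

Theorem proposition3p8 (R : realType) (n k : nat) (M : 'M[R]_(n + n))
  (nu : 'I_k -> R) (d : 'I_n -> R) (idx : 'I_k -> 'I_n)
  (X : 'M[R]_(n + n, k + k)) :
  (1 <= k)%N -> (k <= n)%N ->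
  posdef_mx M ->
  (forall i, 0 < nu i) ->
  (forall i j : 'I_k, (i < j)%N -> nu i < nu j) ->
  symplectic_eigenvalues M d ->
  injective idx ->
  critical_point M nu X ->
  X^T *m M *m X = bdiag2 (diagv (fun i => d (idx i))) ->
  (exists alpha beta : 'I_k, (alpha < beta)%N /\ d (idx alpha) < d (idx beta)) ->
  ~ local_minimizer M nu X /\ saddle_point M nu X.
Proof.
move=> _ _ _ nu_gt0 nu_incr [d_gt0 _] _ crit XMX [a [b [lt_ab d_ab]]].
have not_min : ~ local_minimizer M nu X.
  exact: (not_local_minimizer_of_inversion XMX (nu_incr _ _ lt_ab) d_ab).
have trace_gt0 : 0 < \tr (diagv nu *m diagv (fun i => d (idx i))).
  exact: (mxtrace_diag_mul_gt0 a nu_gt0 (fun i => d_gt0 (idx i))).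
have not_max := not_local_maximizer_of_trace_gt0 XMX trace_gt0.
by split=> //; split.
Qed.
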